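(* There are exactly $q^3-q^2-q-1$ points $P$ (not in $\mathcal P_{2,q}$ and not on $m_T$) for which the projection of $\mathcal P_{2,q}$ from $P$ onto $m_T$ is one of the sets $\mathcal S_\theta$, namely $T$ and the points of $\mathrm{Fig}(T)$ not incident with $m_T$. These projection vertices are distributed as follows. (1) If $q$ is even: (a) there is exactly one projection vertex for $\mathcal P_{2,q}$ onto $\mathcal S_1$, namely $T$; (b) for $\theta\in\mathbb{F}_{q^3}^*$ with $N(\theta)\neq1$, there are exactly $q^2+q+1$ projection vertices for $\mathcal P_{2,q}$ onto $\mathcal S_\theta$, namely the points of $\Pi_\theta$. (2) If $q$ is odd: (a) there are no projection vertices for $\mathcal P_{2,q}$ onto $\mathcal S_{-1}$; (b) there are exactly $q^2+q+2$ projection vertices for $\mathcal P_{2,q}$ onto $\mathcal S_1$, namely $T$ and the points of $\Pi_{-1}$; (c) for $\theta\in\mathbb{F}_{q^3}^*$ with $N(\theta)\neq\pm1$, there are exactly $q^2+q+1$ projection vertices for $\mathcal P_{2,q}$ onto $\mathcal S_\theta$, namely the points of $\Pi_{-\theta}$.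
   Context: Let $q$ be a prime power, $\mathbb{F}_{q^3}^*=\mathbb{F}_{q^3}\setminus\{0\}$, $N(x)=x^{q^2+q+1}$. Points of $\mathrm{PG}(2,q^3)$ have homogeneous coordinates $(x,y,z)$ and lines $[a,b,c]$. Let $\phi$ be the collineation $(x,y,z)\mapsto(z^q,x^q,y^q)$ (on lines $[d,e,f]\mapsto[f^q,d^q,e^q]$), whose fixed points form the subplane $\mathcal P_{2,q}=\{(x,x^q,x^{q^2}):x\in\mathbb{F}_{q^3}^*\}$. A point has Type II (resp. III) if its $\phi$-orbit is three collinear (resp. non-collinear) points; a line has Type III if its $\phi$-orbit is three non-concurrent lines. For a Type III point $X$, the Fig-block is $\mathrm{Fig}(X)=\mathcal E_X\cup\mathcal F_X$, where $\mathcal E_X$ is the set of Type II points on the line $X^\phi X^{\phi^2}$ and $\mathcal F_X=\{\ell^\phi\cap\ell^{\phi^2}:\ell\text{ a Type III line through }X\}$. Let $T=(0,0,1)$ and $m_T$ the line $[0,0,1]$. For $\theta\in\mathbb{F}_{q^3}^*$, $\mathcal S_\theta=\{(x\theta,x^q,0):x\in\mathbb{F}_{q^3}^*\}$ and $\Pi_\theta=\{(r\theta^{q+1},r^q,r^{q^2}\theta):r\in\mathbb{F}_{q^3}^*\}$. For a subplane $\mathcal B$ of order $q$ and a point $P$ not in $\mathcal B$ and not on $m_T$, the projection of $\mathcal B$ from $P$ onto $m_T$ is $\{PQ\cap m_T:Q\in\mathcal B\}$; if it equals $\mathcal S_\theta$, then $P$ is called a projection vertex for $\mathcal B$ onto $\mathcal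 S_\theta$. *)

(* Projective plane PG(2, F) over a finite field F with |F| = q^3.
   Points and lines of PG(2,F) are represented by their normalized homogeneous
   coordinate vectors: nonzero triples whose first nonzero coordinate is 1. *)
From HB Require Import structures.
From mathcomp Require Import all_boot all_order all_algebra.
Unset Printing Implicit Defensive.
Import GRing.Theory.
Local Open Scope ring_scope.

Section PG2.
Variables (F : finFieldType) (q : nat).

Definition vec := (F * F * F)%type.

Definition pnorm (v : vec) : vec :=
  let: (x, y, z) := v in
  if x != 0 then (1, y / x, z / x)
  else if y != 0 then (0, 1, z / y)
  else if z != 0 then (0, 0, 1)
  else (0, 0, 0).

Definition is_point (v : vec) : bool := (v != (0, 0, 0)) && (pnorm v == v).

Definition pts : {set vec} := [set v | is_point v].

Definition dot (u v : vec) : F :=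
  let: (a1, a2, a3) := u in let: (b1, b2, b3) := v in a1 * b1 + a2 * b2 + a3 * b3.

Definition cross (u v : vec) : vec :=
  let: (a1, a2, a3) := u in let: (b1, b2, b3) := v in
  (a2 * b3 - a3 * b2, a3 * b1 - a1 * b3, a1 * b2 - a2 * b1).

Definition incid (P L : vec) : bool := dot P L == 0.

(* line through two distinct points / intersection point of two distinct lines *)
Definition join (P Q : vec) : vec := pnorm (cross P Q).

Definition coll3 (P Q R : vec) : bool := dot P (cross Q R) == 0.

(* the collineation phi : (x,y,z) |-> (z^q, x^q, y^q);
   on lines [d,e,f] |-> [f^q, d^q, e^q] (same formula) *)
Definition phi (v : vec) : vec :=
  let: (x, y, z) := v in pnorm (z ^+ q, x ^+ q, y ^+ q).

Definition three_orbit (v : vec) : bool :=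
  [&& v != phi v, v != phi (phi v) & phi v != phi (phi v)].

Definition typeII_pt (P : vec) : bool :=
  [&& is_point P, three_orbit P & coll3 P (phi P) (phi (phi P))].

Definition typeIII_pt (P : vec) : bool :=
  [&& is_point P, three_orbit P & ~~ coll3 P (phi P) (phi (phi P))].

Definition typeIII_line (L : vec) : bool :=
  [&& is_point L, three_orbit L & ~~ coll3 L (phi L) (phi (phi L))].

Definition E_set (X : vec) : {set vec} :=
  [set P | typeII_pt P && incid P (join (phi X) (phi (phi X)))].

Definition F_set (X : vec) : {set vec} :=
  [set join (phi l) (phi (phi l)) | l in [set l | typeIII_line l && incid X l]].

Definition Fig (X : vec) : {set vec} := E_set X :|: F_set X.

Definition T : vec := (0, 0, 1).
Definition mT : vec := (0, 0, 1).

Definition normF (x : F) : F := x ^+ (q ^ 2 + q + 1)%N.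

Definition P2q : {set vec} :=
  [set pnorm (x, x ^+ q, x ^+ (q ^ 2)%N) | x : F & x != 0].

Definition S_set (th : F) : {set vec} :=
  [set pnorm (x * th, x ^+ q, 0) | x : F & x != 0].

Definition Pi_set (th : F) : {set vec} :=
  [set pnorm (r * th ^+ q.+1, r ^+ q, r ^+ (q ^ 2)%N * th) | r : F & r != 0].

Definition proj (B : {set vec}) (P : vec) : {set vec} :=
  [set join (join P Q) mT | Q in B].

Definition is_vertex (B : {set vec}) (th : F) (P : vec) : bool :=
  [&& is_point P, P \notin B, ~~ incid P mT & proj B P == S_set th].

Definition vertices (B : {set vec}) (th : F) : {set vec} :=
  [set P | is_vertex B th P].

End PG2.

(* Write a point off m_T as P = (a, b, 1).  The line joining P to the point
   (x, x^q, x^(q^2)) of P_{2,q} meets m_T in (x - a x^(q^2), x^q - b x^(q^2), 0),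
   while S_theta is the set of points (1, r, 0) with N(r) = N(theta)^-1.
   Taking norms, if P is a projection vertex onto S_theta then
   N(x - a x^(q^2)) = N(theta) N(x^q - b x^(q^2)) for every x <> 0.  Expanded,
   both sides involve seven monomials whose exponents are distinct modulo
   q^3 - 1, so the coefficients agree; this forces either a = b = 0 and
   N(theta) = 1 (P = T), or b = a^(-q^2) and N(theta) = -N(a) with N(a) <> 1
   (P = (a, a^(-q^2), 1)).  Conversely, Hilbert 90 for F_(q^3)/F_q shows that
   the projections from these points are full norm classes of m_T, namely
   S_theta.  The Type III lines through T are [1, e, 0] with N(e) <> -1, and
   they yield exactly the points (a, a^(-q^2), 1) with N(a) <> 1.  Each norm
   class has q^2 + q + 1 elements, which gives the counts; -1 = 1 in F exactly
   when q is even. *)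

From mathcomp Require Import all_boot all_order all_algebra.
From mathcomp Require Import cyclic pgroup abelian finfield.
From mathcomp Require Import ring zify.
Import GRing.Theory.
Local Open Scope ring_scope.

Lemma expf_card_pred (F : finFieldType) (x : F) : x != 0 -> x ^+ #|F|.-1 = 1.
Proof.
move=> x0; apply/(mulIf x0).
by rewrite -exprSr prednK ?expf_card ?mul1r // ltnW ?finNzRing_gt1.
Qed.

Lemma finField_odd_oppr1 (F : finFieldType) : odd #|F| -> (-1 : F) != 1.
Proof.
apply: contraL => /eqP N1E.
(* In characteristic 2 the additive group of F is a 2-group. *)
have char2 : (2%N \in [pchar F])%R.
  by rewrite inE /= -[2%N]/(1 + 1)%N natrD -{1}N1E addNr eqxx.
have := abelem_pgroup (fin_ring_pchar_abelem char2).
rewrite pgroupE cardsT odd_2'nat => /pnat_1 F1; apply/negP => /F1 F1E.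
by have := finNzRing_gt1 F; rewrite F1E.
Qed.

Lemma has_prim_root_finField (F : finFieldType) :
  exists g : F, #|F|.-1.-primitive_root g.
Proof.
have n_gt0 : (0 < #|F|.-1)%N by rewrite -subn1 subn_gt0 finNzRing_gt1.
have unity : all #|F|.-1.-unity_root (enum (predC1 (0 : F))).
  by apply/allP=> x; rewrite mem_enum unity_rootE => /expf_card_pred ->.
have /hasP[g _ prim_g] : has #|F|.-1.-primitive_root (enum (predC1 (0 : F))).
  by apply: has_prim_root n_gt0 unity (enum_uniq _) _; rewrite -cardE cardC1.
by exists g.
Qed.

Lemma vanishing_sum_expr_coef (F : finFieldType) (I : finType) (C : I -> F)
    (e : I -> nat) :
  injective (fun i => e i %% #|F|.-1)%N ->
  (forall x : F, x != 0 -> \sum_i C i * x ^+ e i = 0) -> forall i, C i = 0.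
Proof.
move=> e_inj vanish i0; set d := fun i => (e i %% #|F|.-1)%N.
pose p : {poly F} := \sum_i C i *: 'X^(d i).
have p0 : p = 0.
  apply: (@roots_geq_poly_eq0 _ _ (enum (predC1 0))); last first.
  - rewrite -cardE cardC1 /p.
    apply: (big_ind (fun r : {poly F} => size r <= #|F|.-1)%N).
    + by rewrite size_poly0.
    + by move=> r1 r2 le1 le2; rewrite (leq_trans (size_polyD _ _)) // geq_max le1.
    + move=> i _; rewrite (leq_trans (size_scale_leq _ _)) // size_polyXn ltn_pmod //.
      by rewrite -subn1 subn_gt0 finNzRing_gt1.
  - exact: enum_uniq.
  apply/allP=> x; rewrite mem_enum /= => x0; rewrite /root horner_sum.
  apply/eqP; rewrite -[RHS](vanish x x0); apply: eq_bigr => i _.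
  by rewrite hornerZ hornerXn /d expr_mod // expf_card_pred.
have := congr1 (fun r : {poly F} => r`_(d i0)) p0.
rewrite coef0 /p coef_sum (bigD1 i0) //= coefZ coefXn eqxx mulr1 big1 ?addr0 //.
by move=> i ne_i_i0; rewrite coefZ coefXn (inj_eq e_inj) eq_sym (negPf ne_i_i0) mulr0.
Qed.

Lemma imset_nzP (F : finFieldType) (T : finType) (f : F -> T) v :
  reflect (exists2 x, x != 0 & v = f x) (v \in [set f x | x : F & x != 0]).
Proof.
apply: (iffP imsetP) => [[x]|[x x0 ->]]; last by exists x; rewrite ?inE.
by rewrite inE => x0 ->; exists x.
Qed.

Section ProjectiveCoordinates.
Context {F : finFieldType}.
Implicit Types (k x y z : F) (u v : vec F).

Definition vscale k v : vec F := let: (x, y, z) := v in (k * x, k * y, k * z).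

Lemma vscaleA k1 k2 v : vscale k1 (vscale k2 v) = vscale (k1 * k2) v.
Proof. by case: v => [[x y] z] /=; rewrite !mulrA. Qed.

Lemma vscale1 v : vscale 1 v = v.
Proof. by case: v => [[x y] z] /=; rewrite !mul1r. Qed.

Lemma pnorm_x x y z : x != 0 -> pnorm F (x, y, z) = (1, y / x, z / x).
Proof. by move=> x0; rewrite /pnorm x0. Qed.

Lemma pnorm_0y y z : y != 0 -> pnorm F (0, y, z) = (0, 1, z / y).
Proof. by move=> y0; rewrite /pnorm eqxx y0. Qed.

Lemma pnorm_00z z : z != 0 -> pnorm F (0, 0, z) = (0, 0, 1).
Proof. by move=> z0; rewrite /pnorm eqxx z0. Qed.

Lemma pnorm000 : pnorm F (0, 0, 0) = (0, 0, 0).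
Proof. by rewrite /pnorm eqxx. Qed.

Lemma pnorm_1 y z : pnorm F (1, y, z) = (1, y, z).
Proof. by rewrite pnorm_x ?oner_eq0 // !divr1. Qed.

Lemma pnorm_01 z : pnorm F (0, 1, z) = (0, 1, z).
Proof. by rewrite pnorm_0y ?oner_eq0 // divr1. Qed.

Lemma pnorm_scale k v : k != 0 -> pnorm F (vscale k v) = pnorm F v.
Proof.
case: v => [[x y] z] k0; rewrite /vscale.
have [-> | x0] := eqVneq x 0; last first.
  by rewrite !pnorm_x ?mulf_neq0 //; congr (_, _, _); field; rewrite x0 k0.
have [-> | y0] := eqVneq y 0; last first.
  by rewrite mulr0 !pnorm_0y ?mulf_neq0 //; congr (_, _, _); field; rewrite y0 k0.
have [-> | z0] := eqVneq z 0; first by rewrite !mulr0.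
by rewrite !mulr0 !pnorm_00z ?mulf_neq0.
Qed.

Lemma pnorm_multiple v : exists2 k, k != 0 & pnorm F v = vscale k v.
Proof.
case: v => [[x y] z].
have [-> | x0] := eqVneq x 0; last first.
  by exists x^-1; rewrite ?invr_eq0 // pnorm_x // /vscale mulVf // !(mulrC x^-1).
have [-> | y0] := eqVneq y 0; last first.
  by exists y^-1; rewrite ?invr_eq0 // pnorm_0y // /vscale mulr0 mulVf // mulrC.
have [-> | z0] := eqVneq z 0; first by exists 1; rewrite ?oner_eq0 // pnorm000 vscale1.
by exists z^-1; rewrite ?invr_eq0 // pnorm_00z // /vscale mulr0 mulVf.
Qed.

Lemma eq_pnorm u v : pnorm F u = pnorm F v -> exists2 k, k != 0 & u = vscale k v.
Proof.
have [k k0 ->] := pnorm_multiple u; have [j j0 ->] := pnorm_multiple v => kj.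
exists (k^-1 * j); first by rewrite mulf_neq0 ?invr_eq0.
by rewrite -vscaleA -kj vscaleA mulVf // vscale1.
Qed.

Lemma pnorm_id v : pnorm F (pnorm F v) = pnorm F v.
Proof. by have [k k0 kv] := pnorm_multiple v; rewrite {1}kv pnorm_scale. Qed.

Lemma pnorm_point P : is_point F P -> pnorm F P = P.
Proof. by case/andP=> _ /eqP. Qed.

Lemma pnorm_eq0 v : (pnorm F v == (0, 0, 0)) = (v == (0, 0, 0)).
Proof.
have [k k0 ->] := pnorm_multiple v; case: v => [[x y] z].
by rewrite /vscale !xpair_eqE !mulf_eq0 (negPf k0).
Qed.

Lemma is_point_pnorm v : v != (0, 0, 0) -> is_point F (pnorm F v).
Proof. by move=> v0; rewrite /is_point pnorm_eq0 v0 pnorm_id eqxx. Qed.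

Lemma cross_scalel k u v : cross F (vscale k u) v = vscale k (cross F u v).
Proof. by case: u v => [[a1 a2] a3] [[b1 b2] b3] /=; congr (_, _, _); ring. Qed.

Lemma cross_scaler k u v : cross F u (vscale k v) = vscale k (cross F u v).
Proof. by case: u v => [[a1 a2] a3] [[b1 b2] b3] /=; congr (_, _, _); ring. Qed.

End ProjectiveCoordinates.

Arguments pnorm : simpl never.
Arguments cross : simpl never.
Arguments vscale : simpl never.

Section ProjectionVertices.
Context {F : finFieldType} {q : nat}.
Hypothesis cardF : #|F| = (q ^ 3)%N.
Hypothesis exprqD : forall x y : F, (x + y) ^+ q = x ^+ q + y ^+ q.

(** * Frobenius map and norm *)

(* Locked, so that [ring] and [field] see [frob x] as an atom rather than as a
   power with a symbolic exponent. *)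
Fact frob_key : unit. Proof. by []. Qed.
Definition frob : F -> F := locked_with frob_key (fun x => x ^+ q).
Lemma frobE x : frob x = x ^+ q. Proof. by rewrite /frob unlock. Qed.
Local Notation N := (normF F q).

Lemma q_gt1 : (1 < q)%N.
Proof. by have := finNzRing_gt1 F; rewrite cardF; case: q => [|[|]]. Qed.

Lemma frobD x y : frob (x + y) = frob x + frob y.
Proof. by rewrite !frobE exprqD. Qed.
Lemma frobM x y : frob (x * y) = frob x * frob y.
Proof. by rewrite !frobE exprMn. Qed.
Lemma frob0 : frob 0 = 0. Proof. by rewrite !frobE expr0n; case: q q_gt1. Qed.
Lemma frob1 : frob 1 = 1. Proof. by rewrite !frobE expr1n. Qed.
Lemma frobN x : frob (- x) = - frob x.
Proof. by apply/eqP; rewrite -addr_eq0 -frobD addNr frob0. Qed.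
Lemma frobB x y : frob (x - y) = frob x - frob y. Proof. by rewrite frobD frobN. Qed.
Lemma frobV x : frob x^-1 = (frob x)^-1. Proof. by rewrite !frobE exprVn. Qed.
Lemma frob_eq0 x : (frob x == 0) = (x == 0).
Proof. by rewrite !frobE expf_eq0; case: q q_gt1. Qed.

Lemma frobK3 x : frob (frob (frob x)) = x.
Proof.
by rewrite !frobE -!exprM -[X in _ = X]expf_card cardF !expnS expn0 muln1 mulnA.
Qed.

Lemma expr_q2 x : x ^+ (q ^ 2) = frob (frob x).
Proof. by rewrite !frobE -exprM mulnn. Qed.

Lemma normFE x : N x = x * frob x * frob (frob x).
Proof. rewrite /normF !exprD expr1 expr_q2 -frobE; ring. Qed.

Lemma normFM x y : N (x * y) = N x * N y. Proof. exact: exprMn. Qed.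
Lemma normFV x : N x^-1 = (N x)^-1. Proof. exact: exprVn. Qed.
Lemma normF1 : N 1 = 1. Proof. exact: expr1n. Qed.
Lemma normF_eq0 x : (N x == 0) = (x == 0). Proof. by rewrite /normF expf_eq0 addn1. Qed.
Lemma normF0 : N 0 = 0. Proof. by apply/eqP; rewrite normF_eq0. Qed.
Lemma normF_frob x : N (frob x) = N x.
Proof. rewrite !normFE frobK3; ring. Qed.
Lemma frob_normF x : frob (N x) = N x.
Proof. rewrite normFE !frobM frobK3; ring. Qed.
Lemma normFN1 : N (-1) = -1.
Proof. rewrite normFE !frobN !frob1; ring. Qed.
Lemma normFN x : N (- x) = - N x.
Proof. by rewrite -mulN1r normFM normFN1 mulN1r. Qed.

Local Notation K := (q ^ 2 + q + 1)%N.

Lemma predq3E : (q ^ 3).-1 = ((q - 1) * K)%N.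
Proof. rewrite !expnS expn0 !muln1; have := q_gt1; nia. Qed.

Lemma K_gt0 : (0 < K)%N. Proof. by rewrite addn1. Qed.

(** * Hilbert 90 and norm classes *)

Lemma normF_eq1_powers g : (q ^ 3).-1.-primitive_root g ->
  [set v : F | N v == 1] = [set g ^+ (j * (q - 1)) | j : 'I_K].
Proof.
move=> prim_g; apply/setP=> v; rewrite inE; apply/eqP/imsetP => [Nv1|[j _ ->]].
  have v0 : v != 0 by rewrite -normF_eq0 Nv1 oner_neq0.
  have vM : v ^+ (q ^ 3).-1 = 1 by rewrite -cardF expf_card_pred.
  have [[i lt_i_M] /= vE] := prim_rootP prim_g vM.
  have : g ^+ (i * K) == g ^+ 0 by rewrite expr0 exprM -vE -Nv1 /normF.
  rewrite (eq_prim_root_expr prim_g) mod0n -/(dvdn _ _) predq3E dvdn_pmul2r ?K_gt0 //.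
  case/dvdnP=> j iE.
  have lt_j_K : (j < K)%N.
    by rewrite -(ltn_pmul2r (_ : 0 < q - 1)%N) -?iE 1?mulnC -?predq3E //; have := q_gt1; lia.
  by exists (Ordinal lt_j_K); rewrite // vE iE.
by rewrite /normF -exprM -mulnA mulnC -predq3E exprM (prim_expr_order prim_g) expr1n.
Qed.

Lemma hilbert90 v : N v = 1 -> exists2 w, w != 0 & v = frob w / w.
Proof.
have [g prim_g] := has_prim_root_finField F; rewrite cardF in prim_g.
have g0 : g != 0.
  by rewrite (prim_root_eq0 prim_g) predq3E muln_eq0 negb_or -!lt0n K_gt0 subn_gt0 q_gt1.
have gj0 j : g ^+ j != 0 by rewrite expf_neq0.
move=> /eqP Nv1; have : v \in [set v | N v == 1] by rewrite inE.
rewrite (normF_eq1_powers _ prim_g) => /imsetP[j _ ->].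
exists (g ^+ j) => //; apply: (canRL (mulfK (gj0 j))).
by rewrite !frobE -exprM -exprD mulnBr muln1 subnK // leq_pmulr // ltnW ?q_gt1.
Qed.

Lemma hilbert90_frob2 v : N v = 1 -> exists2 w, w != 0 & v = frob (frob w) / w.
Proof.
move=> /hilbert90[u u0 ->]; exists (frob u)^-1; first by rewrite invr_eq0 frob_eq0.
by rewrite !frobV frobK3 invrK mulrC.
Qed.

Lemma card_normF_eq1 : #|[set v : F | N v == 1]| = K.
Proof.
have [g prim_g] := has_prim_root_finField F; rewrite cardF in prim_g.
rewrite (normF_eq1_powers _ prim_g) card_imset ?card_ord // => i j /eqP.
have ltM (k : 'I_K) : (k * (q - 1) < (q ^ 3).-1)%N.
  by rewrite predq3E mulnC ltn_pmul2l ?subn_gt0 ?q_gt1.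
rewrite (eq_prim_root_expr prim_g) !modn_small ?ltM // eqn_pmul2r ?subn_gt0 ?q_gt1 //.
by move/eqP/val_inj.
Qed.

Lemma card_normF_eq {th} : th != 0 -> #|[set a : F | N a == N th]| = K.
Proof.
move=> th0; rewrite -card_normF_eq1 -(card_imset [set v | N v == 1] (mulIf th0)).
apply: eq_card => a; rewrite inE; apply/eqP/imsetP => [Na|[v]].
  by exists (a / th); rewrite ?divfK // inE normFM normFV Na divff ?normF_eq0.
by rewrite inE => /eqP Nv1 ->; rewrite normFM Nv1 mul1r.
Qed.

(** * The norm identity *)

(* The exponents (i, j, k) of the monomials x^i (x^q)^j (x^(q^2))^k occurring in
   N(x - a x^(q^2)) and N(x^q - b x^(q^2)). *)
Definition norm_monomial (m : 'I_7) : nat * nat * nat :=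
  nth (0, 0, 0)%N [:: (1, 1, 1); (2, 0, 1); (0, 1, 2); (1, 0, 2);
                      (1, 2, 0); (2, 1, 0); (0, 2, 1)]%N m.

Definition norm_exp (m : 'I_7) : nat :=
  let: (i, j, k) := norm_monomial m in (i + j * q + k * q ^ 2)%N.

Lemma expr_norm_exp x m : x ^+ norm_exp m =
  let: (i, j, k) := norm_monomial m in x ^+ i * frob x ^+ j * frob (frob x) ^+ k.
Proof.
rewrite /norm_exp; case: (norm_monomial m) => [[i j] k].
by rewrite !exprD mulnC exprM [(k * _)%N]mulnC exprM expr_q2 -frobE.
Qed.

Lemma norm_exp_inj : injective (fun m => norm_exp m %% (q ^ 3).-1)%N.
Proof.
move=> [m lt_m7] [n lt_n7]; rewrite /norm_exp /= => mn; apply: val_inj => /=.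
(* For q > 2 all exponents are below q^3 - 1; for q = 2 the exponent 7 of
   (1, 1, 1) wraps around to 0. *)
have [q2|q_ne2] := eqVneq q 2%N.
  move: mn; rewrite q2.
  by case: m lt_m7 => [|[|[|[|[|[|[|]]]]]]] //; case: n lt_n7 => [|[|[|[|[|[|[|]]]]]]].
have q_gt2 : (2 < q)%N by rewrite ltn_neqAle eq_sym q_ne2 q_gt1.
move: mn; rewrite !modn_small ?predq3E;
  case: m lt_m7 => [|[|[|[|[|[|[|]]]]]]] //; case: n lt_n7 => [|[|[|[|[|[|[|]]]]]]] //= *;
  nia.
Qed.

Definition twist a x := x - a * frob (frob x).

Lemma twistB a x y : twist a (x - y) = twist a x - twist a y.
Proof. rewrite /twist !frobB; ring. Qed.

Lemma twist_eq0 a x : N a != 1 -> (twist a x == 0) = (x == 0).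
Proof.
move=> Na1; apply/idP/idP => [|/eqP->]; last by rewrite /twist !frob0 mulr0 subr0.
rewrite subr_eq0; apply: contraLR => x0; apply: contra Na1 => /eqP xE.
have x_Na : N x * N a = N x * 1 by rewrite mulr1 {2}xE normFM !normF_frob mulrC.
by apply/eqP/(mulfI _ x_Na); rewrite normF_eq0.
Qed.

Lemma twist_bij a : N a != 1 -> bijective (twist a).
Proof.
move=> Na1; apply: injF_bij => x y /eqP; rewrite -subr_eq0 -twistB twist_eq0 //.
by rewrite subr_eq0 => /eqP.
Qed.

Lemma norm_identity_coef a b c :
  (forall x, x != 0 -> N (twist a x) = c * N (frob x - b * frob (frob x))) ->
  [/\ 1 - N a = c * (1 - N b), c * b = - (a * frob a)
    & c * frob b * frob (frob b) = - frob (frob a)].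
Proof.
move=> normE; pose sa := frob a; pose sb := frob b.
(* The coefficients of the monomials, in the order of [norm_monomial]. *)
pose C (m : 'I_7) : F := nth 0
  [:: (1 - a * sa * frob sa) - c * (1 - b * sb * frob sb); - sa - c * b * sb;
      - a - c * b * frob sb; a * sa + c * b; - frob sa - c * sb * frob sb;
      sa * frob sa + c * sb; a * frob sa + c * frob sb] m.
have coef0 : forall m, C m = 0.
  apply: vanishing_sum_expr_coef; first by rewrite cardF; exact: norm_exp_inj.
  move=> x x0; have := normE x x0; rewrite /twist !normFE !frobB !frobM !frobK3.
  rewrite !big_ord_recl big_ord0 !expr_norm_exp /C /sa /sb /= => /eqP.
  by rewrite -subr_eq0 => /eqP E; rewrite -[RHS]E; ring.
have := coef0 (@Ordinal 7 0 isT); have := coef0 (@Ordinal 7 3 isT).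
have := coef0 (@Ordinal 7 4 isT); rewrite /C /sa /sb /= !normFE => C4 C3 C0.
split; apply/eqP.
- by rewrite -subr_eq0 -[X in _ == X]C0; apply/eqP; ring.
- by rewrite -addr_eq0 addrC C3.
- by rewrite -addr_eq0 -oppr_eq0 opprD addrC C4.
Qed.

Lemma norm_identity_solutions a b c : c != 0 -> frob c = c ->
  (forall x, x != 0 -> N (twist a x) = c * N (frob x - b * frob (frob x))) ->
  (a = 0 /\ b = 0 /\ c = 1) \/ [/\ a != 0, b = (frob (frob a))^-1 & c = - N a].
Proof.
move=> c0 frob_c /norm_identity_coef[C0 C3 C4].
have [a0|a0] := eqVneq a 0.
  have b0 : b = 0.
    by apply/eqP; move: C3; rewrite a0 mul0r oppr0 => /eqP; rewrite mulf_eq0 (negPf c0).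
  by left; move: C0; rewrite a0 b0 !normFE !mul0r !subr0 mulr1.
right; have ssa0 : frob (frob a) != 0 by rewrite !frob_eq0.
have bE : b = - (a * frob a) / c by rewrite -C3 mulrC mulKf.
have cE : c = - N a.
  have : frob (frob a) * (c + N a) = c * (c * frob b * frob (frob b) + frob (frob a)).
    by rewrite bE !(frobM, frobV, frobN) !frob_c frobK3 normFE; field.
  by rewrite C4 addNr mulr0 => /eqP; rewrite mulf_eq0 (negPf ssa0) addr_eq0 => /eqP.
split=> //; rewrite bE cE normFE; field.
by rewrite ssa0 oppr_eq0 !mulf_neq0 // frob_eq0.
Qed.

(** * Projections of P_{2,q} onto m_T *)

Definition mT_norm_pts c : {set vec F} := [set (1, r, 0) | r : F & N r == c].

Lemma pnorm_norm_pts (f : F -> F) d : d != 0 ->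
  (forall w, N (f w) = N w) ->
  (forall v, N v = 1 -> exists2 w, w != 0 & v = f w / w) ->
  [set pnorm F (w, d * f w, 0) | w : F & w != 0] = mT_norm_pts (N d).
Proof.
move=> d0 normF_f hilbert_f; apply/setP=> P; apply/imset_nzP/imsetP => [[w w0 ->]|[r]].
  exists (d * f w / w); last by rewrite pnorm_x // mul0r.
  by rewrite inE !normFM normFV normF_f mulfK ?normF_eq0.
rewrite inE => /eqP Nr ->.
have [w w0 rE] : exists2 w, w != 0 & r / d = f w / w.
  by apply: hilbert_f; rewrite normFM normFV Nr divff ?normF_eq0.
exists w => //; rewrite pnorm_x // mul0r -mulrA -rE mulrC divfK //.
Qed.

Lemma S_setE th : th != 0 -> S_set F q th = mT_norm_pts (N th)^-1.
Proof.
move=> th0; have thV0 : th^-1 != 0 by rewrite invr_eq0.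
rewrite -normFV -(pnorm_norm_pts _ _ thV0 normF_frob hilbert90).
apply: eq_imset => x; rewrite -(pnorm_scale _ _ thV0) /vscale.
by rewrite [th^-1 * (_ * _)]mulrC mulfK // mulr0 frobE.
Qed.

Definition proj_from a b : {set vec F} :=
  [set pnorm F (twist a x, frob x - b * frob (frob x), 0) | x : F & x != 0].

Lemma proj_P2q_from {a b z P} : z != 0 -> P = vscale z (a, b, 1) ->
  proj F (P2q F q) P = proj_from a b.
Proof.
move=> z0 ->; rewrite /proj /P2q -imset_comp; apply: eq_imset => x /=.
have [k k0 ->] := pnorm_multiple (x, x ^+ q, x ^+ (q ^ 2)).
rewrite /join cross_scaler cross_scalel pnorm_scale // pnorm_scale //.
have [j j0 ->] := pnorm_multiple (cross F (a, b, 1) (x, x ^+ q, x ^+ (q ^ 2))).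
rewrite cross_scalel pnorm_scale // expr_q2 -frobE /twist /cross.
by congr (pnorm F (_, _, _)); ring.
Qed.

Lemma proj_from00 : proj_from 0 0 = mT_norm_pts 1.
Proof.
rewrite -normF1 -(pnorm_norm_pts _ _ (oner_neq0 F) normF_frob hilbert90).
by apply: eq_imset => x; rewrite /twist !mul0r !subr0 mul1r.
Qed.

Lemma proj_from_frob2 a : a != 0 -> N a != 1 ->
  proj_from a (frob (frob a))^-1 = mT_norm_pts (- (N a)^-1).
Proof.
move=> a0 Na1; set d := - (frob (frob a))^-1.
have d0 : d != 0 by rewrite oppr_eq0 invr_eq0 !frob_eq0.
have normF_frob_frob w : N (frob (frob w)) = N w by rewrite !normF_frob.
rewrite (_ : - (N a)^-1 = N d); last by rewrite normFN normFV !normF_frob.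
rewrite -(pnorm_norm_pts _ _ d0 normF_frob_frob hilbert90_frob2).
have [untwist twistK untwistK] := twist_bij a Na1.
apply/setP=> P; apply/imset_nzP/imset_nzP => -[x x0 ->].
  exists (twist a x); first by rewrite twist_eq0.
  rewrite /twist /d !frobB !frobM frobK3.
  by congr (pnorm F (_, _, _)); field; rewrite !frob_eq0.
exists (untwist x); first by rewrite -(twist_eq0 _ _ Na1) untwistK.
rewrite -{1 2}[x](untwistK) /twist /d !frobB !frobM frobK3.
by congr (pnorm F (_, _, _)); field; rewrite !frob_eq0.
Qed.

Lemma proj_from_S_cases {a b th} : th != 0 -> proj_from a b = S_set F q th ->
  (a = 0 /\ b = 0 /\ N th = 1) \/ [/\ a != 0, b = (frob (frob a))^-1 & N th = - N a].
Proof.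
move=> th0 projE; apply: norm_identity_solutions; rewrite ?normF_eq0 ?frob_normF // => x x0.
have : pnorm F (twist a x, frob x - b * frob (frob x), 0) \in S_set F q th.
  by rewrite -projE; apply/imset_nzP; exists x.
case/imset_nzP => y y0 /eq_pnorm[k k0]; rewrite /vscale => -[-> -> _].
by rewrite -frobE !normFM normF_frob mulrA mulrC.
Qed.

Definition vertex_pt a : vec F := pnorm F (a, (frob (frob a))^-1, 1).

Definition vertex_pts c : {set vec F} := [set vertex_pt a | a : F & N a == c].

Lemma vertex_ptE a : a != 0 -> vertex_pt a = vscale a^-1 (a, (frob (frob a))^-1, 1).
Proof.
by move=> a0; rewrite /vertex_pt pnorm_x // /vscale mulVf // mulr1 mulrC div1r.
Qed.

Lemma vertex_pt_off_mT a : a != 0 -> ~~ incid F (vertex_pt a) (mT F).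
Proof. by move=> a0; rewrite vertex_ptE // /incid /dot /= !mulr0 !add0r !mulr1 invr_eq0. Qed.

Lemma vertex_pt_P2q a : a != 0 -> (vertex_pt a \in P2q F q) = (N a == 1).
Proof.
move=> a0; apply/imset_nzP/eqP => [[x x0 /eq_pnorm[k k0]]|/hilbert90[w w0 aE]].
  rewrite /vscale => -[aE _ kE].
  by have := congr1 N kE; rewrite normF1 aE expr_q2 !normFM !normF_frob => <-.
exists (frob w); first by rewrite frob_eq0.
rewrite /vertex_pt -(pnorm_scale _ _ w0) expr_q2 -frobE frobK3 /vscale aE.
by rewrite !(frobM, frobV) frobK3; congr (pnorm F (_, _, _)); field; rewrite ?frob_eq0 ?w0.
Qed.

Lemma T_notin_P2q : T F \notin P2q F q.
Proof.
by apply/imset_nzP => -[x x0]; rewrite pnorm_x // /T => -[/eqP]; rewrite eq_sym oner_eq0.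
Qed.

Lemma is_point_T : is_point F (T F).
Proof. by rewrite /is_point /T pnorm_00z ?oner_eq0 // eqxx xpair_eqE oner_eq0 andbF. Qed.

Lemma is_vertex_T th : N th = 1 -> is_vertex F q (P2q F q) th (T F).
Proof.
move=> Nth; have th0 : th != 0 by rewrite -normF_eq0 Nth oner_eq0.
apply/and4P; split; [exact: is_point_T | exact: T_notin_P2q | |].
  by rewrite /incid /T /mT /dot !mul0r !add0r mulr1 oner_eq0.
rewrite (proj_P2q_from (oner_neq0 F) (esym (vscale1 _))).
by rewrite proj_from00 S_setE // Nth invr1.
Qed.

Lemma is_vertex_pt th a : th != 0 -> N a = - N th -> N th != -1 ->
  is_vertex F q (P2q F q) th (vertex_pt a).
Proof.
move=> th0 Na Nth1.
have a0 : a != 0 by rewrite -normF_eq0 Na oppr_eq0 normF_eq0.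
have Na1 : N a != 1 by rewrite Na eqr_oppLR.
apply/and4P; split; last first.
- rewrite (proj_P2q_from _ (vertex_ptE _ a0)) ?invr_eq0 // proj_from_frob2 //.
  by rewrite S_setE // Na invrN opprK.
- by rewrite vertex_pt_off_mT.
- by rewrite vertex_pt_P2q.
- by rewrite is_point_pnorm // !xpair_eqE oner_eq0 !andbF.
Qed.

Lemma is_vertex_cases {th P} : th != 0 -> is_vertex F q (P2q F q) th P ->
  (P = T F /\ N th = 1) \/
  (N th != -1 /\ exists2 a, N a = - N th & P = vertex_pt a).
Proof.
case: P => [[x y] z] th0 /and4P[pointP notin_P2q off_mT /eqP projP].
have z0 : z != 0 by move: off_mT; rewrite /incid /mT /dot !mulr0 !add0r mulr1.
have PE : (x, y, z) = vscale z (x / z, y / z, 1).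
  by rewrite /vscale mulr1 !(mulrC z) !divfK.
have Pnorm : pnorm F (x, y, z) = (x, y, z) by rewrite pnorm_point.
rewrite (proj_P2q_from z0 PE) in projP.
case: (proj_from_S_cases th0 projP) => [[/eqP xz0 [/eqP yz0 Nth]] | [a0 yzE Nth]].
  left; split => //; move: xz0 yz0; rewrite !mulf_eq0 !invr_eq0 (negPf z0) !orbF.
  by move=> /eqP x0 /eqP y0; rewrite -Pnorm x0 y0 pnorm_00z.
right; split; last by exists (x / z); rewrite ?Nth ?opprK // -Pnorm PE pnorm_scale // yzE.
apply: contra notin_P2q; rewrite Nth eqr_oppLR opprK => /eqP Na1.
by rewrite -Pnorm PE pnorm_scale // yzE -/(vertex_pt _) vertex_pt_P2q // Na1.
Qed.

Lemma verticesE th : th != 0 -> vertices F q (P2q F q) th =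
  (if N th == 1 then [set T F] else set0) :|:
  (if N th == -1 then set0 else vertex_pts (- N th)).
Proof.
move=> th0; apply/setP => P; rewrite inE in_setU; apply/idP/orP.
  case/(is_vertex_cases th0) => [[-> ->] | [Nth1 [a Na ->]]].
    by left; rewrite eqxx set11.
  by right; rewrite (negPf Nth1); apply/imsetP; exists a; rewrite ?inE ?Na.
case; case: eqP => [Nth|Nth1]; rewrite ?in_set0 //.
  by move=> /set1P ->; apply: is_vertex_T.
case/imsetP => a; rewrite inE => /eqP Na ->.
by apply: is_vertex_pt => //; apply/eqP.
Qed.

(** * The figure Fig(T) *)

Lemma phiE x y z : phi F q (x, y, z) = pnorm F (frob z, frob x, frob y).
Proof. by rewrite !frobE. Qed.

Lemma phi_T : phi F q (T F) = (1, 0, 0).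
Proof. by rewrite phiE frob0 frob1 pnorm_1. Qed.

Lemma phi_1e0 e : phi F q (1, e, 0) = (0, 1, frob e).
Proof. by rewrite phiE frob0 frob1 pnorm_01. Qed.

Lemma phi_01 e : e != 0 -> phi F q (0, 1, frob e) = (1, 0, (frob (frob e))^-1).
Proof. by move=> e0; rewrite phiE frob0 frob1 pnorm_x ?frob_eq0 // mul0r mul1r. Qed.

Lemma phi_010 : phi F q (0, 1, 0) = T F.
Proof. by rewrite phiE frob0 frob1 pnorm_00z ?oner_eq0. Qed.

Lemma join_phi_T : join F (phi F q (T F)) (phi F q (phi F q (T F))) = mT F.
Proof.
rewrite phi_T (phi_1e0 0) frob0 /join /cross !(mul0r, mulr0, mulr1, subr0).
by rewrite pnorm_00z ?oner_eq0.
Qed.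

Lemma join_phi_010 :
  join F (phi F q (0, 1, 0)) (phi F q (phi F q (0, 1, 0))) = (0, 1, 0).
Proof.
by rewrite phi_010 phi_T /join /T /cross !(mul0r, mulr0, mulr1, subr0) pnorm_01.
Qed.

Lemma join_phi_100 :
  join F (phi F q (1, 0, 0)) (phi F q (phi F q (1, 0, 0))) = (1, 0, 0).
Proof.
rewrite (phi_1e0 0) frob0 phi_010 /join /T /cross.
by rewrite !(mul0r, mulr0, mulr1, subr0) pnorm_1.
Qed.

Lemma join_phi_1e0 e : e != 0 ->
  join F (phi F q (1, e, 0)) (phi F q (phi F q (1, e, 0))) =
  vertex_pt (- (frob (frob e))^-1).
Proof.
move=> e0; rewrite phi_1e0 phi_01 // /join /vertex_pt.
rewrite -[RHS](pnorm_scale _ _ (_ : -1 != 0)) ?oppr_eq0 ?oner_eq0 //.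
rewrite !(frobN, frobV) frobK3 /cross /vscale; congr (pnorm F (_, _, _));
  by field; rewrite ?oppr_eq0 ?oner_eq0 ?frob_eq0 ?e0.
Qed.

Lemma coll_phi_1e0 e : e != 0 ->
  coll3 F (1, e, 0) (phi F q (1, e, 0)) (phi F q (phi F q (1, e, 0))) = (N e == -1).
Proof.
move=> e0; have sse0 : frob (frob e) != 0 by rewrite !frob_eq0.
rewrite phi_1e0 phi_01 // /coll3 /cross /dot normFE.
rewrite (_ : 1 * _ + _ + _ = (e * frob e * frob (frob e) + 1) / frob (frob e)).
  by rewrite mulf_eq0 invr_eq0 (negPf sse0) orbF addr_eq0.
by field.
Qed.

Lemma three_orbit_1e0 e : e != 0 -> three_orbit F q (1, e, 0).
Proof.
move=> e0; rewrite /three_orbit phi_1e0 phi_01 // !xpair_eqE.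
by rewrite oner_eq0 (eq_sym 0 1) oner_eq0 (negPf e0) /= andbF.
Qed.

Lemma lines_through_T {l} : is_point F l -> incid F (T F) l ->
  l = (0, 1, 0) \/ exists e, l = (1, e, 0).
Proof.
case: l => [[l1 l2] l3] /andP[nz /eqP lE].
rewrite /incid /T /dot !mul0r !add0r mul1r => /eqP l30; move: nz lE; rewrite l30.
have [-> | l10] := eqVneq l1 0.
  have [-> | l20] := eqVneq l2 0; first by rewrite eqxx.
  by rewrite pnorm_0y // mul0r => _ <-; left.
by rewrite pnorm_x // mul0r => _ <-; right; exists (l2 / l1).
Qed.

Lemma Fig_T_off_mT : [set P in Fig F q (T F) | ~~ incid F P (mT F)] =
  [set vertex_pt a | a : F & (a != 0) && (N a != 1)].
Proof.
apply/setP => P; rewrite inE /Fig in_setU; apply/idP/imsetP.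
  case/andP => /orP[|/imsetP[l]]; first by rewrite inE join_phi_T => /andP[_ ->].
  rewrite inE => /andP[/and3P[pointl _ ncoll] Tl] ->.
  case: (lines_through_T pointl Tl) ncoll => [-> _ | [e ->]].
    by rewrite join_phi_010 /incid /dot /mT !(mulr0, mul0r, addr0) eqxx.
  have [-> _ | e0] := eqVneq e 0.
    by rewrite join_phi_100 /incid /dot /mT !(mulr0, mul0r, addr0) eqxx.
  rewrite coll_phi_1e0 // join_phi_1e0 // => Ne1 _.
  exists (- (frob (frob e))^-1) => //; rewrite inE oppr_eq0 invr_eq0 !frob_eq0 e0.
  by rewrite normFN normFV !normF_frob eqr_oppLR -invrN1 (inj_eq invr_inj).
move=> [a]; rewrite inE => /andP[a0 Na1] ->; rewrite vertex_pt_off_mT // andbT.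
have e0 : - (frob a)^-1 != 0 by rewrite oppr_eq0 invr_eq0 frob_eq0.
apply/orP; right; apply/imsetP; exists ((1, - (frob a)^-1, 0) : vec F).
  rewrite !inE /typeIII_line three_orbit_1e0 // coll_phi_1e0 //.
  rewrite /incid /T /dot !mul0r !add0r mulr0 eqxx andbT /is_point pnorm_1 eqxx andbT.
  by rewrite normFN normFV normF_frob eqr_oppLR opprK invr_eq1 Na1 !xpair_eqE oner_eq0.
by rewrite join_phi_1e0 // !(frobN, frobV) frobK3 invrN invrK opprK.
Qed.

(** * Counting *)

Lemma vertex_pt_inj : {in [pred a | a != 0] &, injective vertex_pt}.
Proof.
move=> a b a0 b0; rewrite /vertex_pt !pnorm_x // => -[_].
by rewrite !mul1r => /invr_inj.
Qed.

Lemma vertex_pt_neqT {a} : a != 0 -> vertex_pt a != T F.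
Proof. by move=> a0; rewrite /vertex_pt pnorm_x // /T !xpair_eqE oner_eq0. Qed.

Lemma T_notin_vertex_pts c : c != 0 -> T F \notin vertex_pts c.
Proof.
move=> c0; apply/imsetP => -[a]; rewrite inE => /eqP Na /eqP.
have a0 : a != 0 by rewrite -normF_eq0 Na.
by rewrite eq_sym (negPf (vertex_pt_neqT a0)).
Qed.

Lemma card_vertex_pts th : th != 0 -> #|vertex_pts (N th)| = K.
Proof.
move=> th0; rewrite -(card_normF_eq th0) card_in_imset // => a b.
rewrite !inE => /eqP Na /eqP Nb; apply: vertex_pt_inj.
  by rewrite inE -normF_eq0 Na normF_eq0.
by rewrite inE -normF_eq0 Nb normF_eq0.
Qed.

Lemma Pi_setE th : th != 0 -> Pi_set F q th = vertex_pts (N th).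
Proof.
move=> th0; apply/setP => P; apply/imset_nzP/imsetP => [[r r0 ->] | [a]].
  have k0 : frob (frob r) * th != 0 by rewrite mulf_neq0 // !frob_eq0.
  exists (r * frob th / frob (frob r)).
    by rewrite inE !normFM normFV !normF_frob mulrAC divff ?normF_eq0 // mul1r.
  rewrite /vertex_pt -[RHS](pnorm_scale _ _ k0) expr_q2 exprS -!frobE.
  by rewrite /vscale !(frobM, frobV) !frobK3; congr (pnorm F (_, _, _)); field;
    rewrite ?frob_eq0 ?r0 ?th0.
rewrite inE => /eqP Na ->.
have [w w0 aE] : exists2 w, w != 0 & a / frob th = frob (frob w) / w.
  by apply: hilbert90_frob2; rewrite normFM normFV normF_frob Na divff ?normF_eq0.
exists w^-1; first by rewrite invr_eq0.
have k0 : frob (frob w^-1) * th != 0 by rewrite mulf_neq0 // !frob_eq0 invr_eq0.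
rewrite /vertex_pt -(pnorm_scale _ _ k0) expr_q2 exprS -!frobE.
rewrite (_ : a = frob th * (frob (frob w) / w)); last by rewrite -aE mulrC divfK ?frob_eq0.
by rewrite /vscale !(frobM, frobV) !frobK3; congr (pnorm F (_, _, _)); field;
  rewrite ?frob_eq0 ?w0 ?th0.
Qed.

Lemma vertex_union : \bigcup_(th : F | th != 0) vertices F q (P2q F q) th =
  T F |: [set vertex_pt a | a : F & (a != 0) && (N a != 1)].
Proof.
apply/setP => P; apply/bigcupP/setU1P => [[th th0] | [-> | /imsetP[a]]].
- rewrite verticesE // in_setU => /orP[].
    by case: eqP; rewrite ?in_set0 // => _ /set1P; left.
  case: eqP => [_ | /eqP Nth1]; rewrite ?in_set0 // => /imsetP[a]; rewrite inE => /eqP Na ->.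
  right; apply/imsetP; exists a => //; rewrite inE -normF_eq0 Na oppr_eq0 normF_eq0 th0.
  by rewrite eqr_oppLR.
- by exists (1 : F); rewrite ?oner_eq0 // verticesE ?oner_eq0 // normF1 eqxx setU11.
rewrite inE => /andP[a0 Na1] ->; exists (- a); rewrite ?oppr_eq0 //.
rewrite verticesE ?oppr_eq0 // normFN eqr_opp (negPf Na1) opprK in_setU.
by rewrite imset_f ?orbT ?inE.
Qed.

Lemma card_vertex_union :
  #|T F |: [set vertex_pt a | a : F & (a != 0) && (N a != 1)]| =
  (q ^ 3 - q ^ 2 - q - 1)%N.
Proof.
rewrite cardsU1 card_in_imset; last first.
  by move=> a b; rewrite !inE => /andP[a0 _] /andP[b0 _]; apply: vertex_pt_inj.
have -> : T F \notin [set vertex_pt a | a : F & (a != 0) && (N a != 1)].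
  apply/imsetP => -[a]; rewrite inE => /andP[a0 _] /eqP.
  by rewrite eq_sym (negPf (vertex_pt_neqT a0)).
have -> : [set a : F | (a != 0) && (N a != 1)] = [set~ 0] :\: [set a | N a == 1].
  by apply/setP => a; rewrite !inE andbC.
rewrite cardsD cardsC1 cardF (setIidPr _) ?card_normF_eq1 ?predq3E.
  by rewrite !expnS expn0 !muln1; have := q_gt1; nia.
by apply/subsetP => a; rewrite !inE; apply: contraTneq => ->; rewrite normF0 eq_sym oner_eq0.
Qed.

Lemma oppr1_even : ~~ odd q -> (-1 : F) = 1.
Proof.
move=> even_q; have := frobN 1.
by rewrite frob1 frobE -signr_odd (negPf even_q) expr0 => <-.
Qed.

Lemma vertices_even : (-1 : F) = 1 ->
  vertices F q (P2q F q) 1 = [set T F] /\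
  (forall th : F, th != 0 -> N th != 1 ->
     #|vertices F q (P2q F q) th| = K /\ vertices F q (P2q F q) th = Pi_set F q th).
Proof.
move=> m1; split=> [|th th0 Nth1].
  by rewrite verticesE ?oner_eq0 // normF1 eqxx m1 eqxx setU0.
have oppE (x : F) : - x = x by rewrite -mulN1r m1 mul1r.
rewrite verticesE // (negPf Nth1) m1 (negPf Nth1) set0U oppE Pi_setE //.
by rewrite card_vertex_pts.
Qed.

Lemma vertices_odd : (-1 : F) != 1 ->
  [/\ vertices F q (P2q F q) (-1) = set0,
      #|vertices F q (P2q F q) 1| = (q ^ 2 + q + 2)%N /\
      vertices F q (P2q F q) 1 = T F |: Pi_set F q (-1)
    & forall th : F, th != 0 -> N th != 1 -> N th != -1 ->
        #|vertices F q (P2q F q) th| = K /\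
        vertices F q (P2q F q) th = Pi_set F q (- th)].
Proof.
move=> m1; have m10 : (-1 : F) != 0 by rewrite oppr_eq0 oner_eq0.
have vertices1 : vertices F q (P2q F q) 1 = T F |: Pi_set F q (-1).
  by rewrite verticesE ?oner_eq0 // normF1 eqxx eq_sym (negPf m1) Pi_setE // normFN1.
split.
- by rewrite verticesE // normFN1 (negPf m1) eqxx setU0.
- split=> //; rewrite vertices1 cardsU1 Pi_setE // T_notin_vertex_pts; last first.
    by rewrite normF_eq0.
  by rewrite card_vertex_pts // add1n -addn1 -addnA.
move=> th th0 Nth1 Nthm1.
rewrite verticesE // (negPf Nth1) (negPf Nthm1) set0U -normFN Pi_setE ?oppr_eq0 //.
by rewrite card_vertex_pts ?oppr_eq0.
Qed.

End ProjectionVertices.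

Theorem lemma7p3 (F : finFieldType) (q : nat)
  (hq : exists p k : nat, [/\ prime p, (0 < k)%N & q = (p ^ k)%N])
  (hF : #|F| = (q ^ 3)%N) :
  let V := \bigcup_(th : F | th != 0) vertices F q (P2q F q) th in
  [/\ #|V| = (q ^ 3 - q ^ 2 - q - 1)%N,
      V = T F |: [set P in Fig F q (T F) | ~~ incid F P (mT F)],
      ~~ odd q ->
        vertices F q (P2q F q) 1 = [set T F] /\
        (forall th : F, th != 0 -> normF F q th != 1 ->
           #|vertices F q (P2q F q) th| = (q ^ 2 + q + 1)%N /\
           vertices F q (P2q F q) th = Pi_set F q th)
    & odd q ->
        [/\ vertices F q (P2q F q) (-1) = set0,
            #|vertices F q (P2q F q) 1| = (q ^ 2 + q + 2)%N /\
            vertices F q (P2q F q) 1 = T F |: Pi_set F q (-1)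
          & forall th : F, th != 0 -> normF F q th != 1 -> normF F q th != -1 ->
              #|vertices F q (P2q F q) th| = (q ^ 2 + q + 1)%N /\
              vertices F q (P2q F q) th = Pi_set F q (- th)]].
Proof.
have [p [k [p_prime k_gt0 qE]]] := hq.
have exprqD (x y : F) : (x + y) ^+ q = x ^+ q + y ^+ q.
  have pF : p \in [pchar F].
    by apply: (@card_finPcharP _ _ (k * 3)); rewrite // hF qE expnM.
  by apply: exprDn_pchar; rewrite qE pnatX (pnatE _ p_prime) pF.
move=> V; rewrite /V vertex_union // Fig_T_off_mT //; split=> //.
- exact: card_vertex_union.
- by move=> /(oppr1_even hF exprqD); apply: vertices_even.
by move=> odd_q; apply: vertices_odd => //; apply: finField_odd_oppr1; rewrite hF oddX.
Qed.
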